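(* Let $\mathbf P=(P,\leq,{}',0,1)$ be an orthogonal lub-complete poset. Then the following conditions are equivalent: (i) $\mathbf P$ is an orthocomplemented poset. (ii) For all $x,y\in P$, $x\leq y$ implies $x\rightarrow_S y=1$. (iii) For all $x,y\in P$, $x\leq y$ implies $x\rightarrow_D y=1$.
   Context: $(P,\leq,{}',0,1)$ is a bounded poset with an antitone involution ${}'$; orthogonal means $x\leq y'$ implies $x\vee y$ exists; lub-complete means for every lower bound $x$ of a finite subset $M$ there is a maximal lower bound of $M$ above $x$; orthocomplemented means $x\vee x'=1$ for all $x$. $L(x,y)$ is the set of common lower bounds and $\mathrm{Max}\,A$ the set of maximal elements of $A$; joins with sets are elementwise. Sasaki implication: $x\rightarrow_S y:=x'\vee \mathrm{Max}\,L(x,y)$; Dishkant implication: $x\rightarrow_D y:=y'\rightarrow_S x'=y\vee \mathrm{Max}\,L(x',y')$. ''$=1$'' means equal to $\{1\}$. *)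

From Stdlib Require Import List.

Record BIPoset : Type := {
  carrier :> Type;
  le : carrier -> carrier -> Prop;
  compl : carrier -> carrier;
  zero : carrier;
  one : carrier;
  le_refl : forall x, le x x;
  le_antisym : forall x y, le x y -> le y x -> x = y;
  le_trans : forall x y z, le x y -> le y z -> le x z;
  le_zero : forall x, le zero x;
  le_one : forall x, le x one;
  compl_antitone : forall x y, le x y -> le (compl y) (compl x);
  compl_invol : forall x, compl (compl x) = x
}.

Arguments le {_} _ _.
Arguments compl {_} _.
Arguments zero {_}.
Arguments one {_}.

Section Defs.
Variable P : BIPoset.

Definition is_join (a b j : P) : Prop :=
  le a j /\ le b j /\ forall u, le a u -> le b u -> le j u.

Definition Lset (x y : P) : P -> Prop := fun z => le z x /\ le z y.

Definition MaxSet (A : P -> Prop) : P -> Prop :=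
  fun z => A z /\ forall w, A w -> le z w -> w = z.

Definition join_set (a : P) (A : P -> Prop) : P -> Prop :=
  fun w => exists z, A z /\ is_join a z w.

Definition sasaki (x y : P) : P -> Prop := join_set (compl x) (MaxSet (Lset x y)).

Definition dishkant (x y : P) : P -> Prop := sasaki (compl y) (compl x).

Definition is_one_set (A : P -> Prop) : Prop := forall w, A w <-> w = one.

Definition orthogonal : Prop :=
  forall x y : P, le x (compl y) -> exists j, is_join x y j.

Definition lower_bound (M : list P) (x : P) : Prop := forall m, In m M -> le x m.

Definition lub_complete : Prop :=
  forall (M : list P) (x : P), lower_bound M x ->
    exists z, MaxSet (lower_bound M) z /\ le x z.

Definition orthocomplemented : Prop := forall x : P, is_join x (compl x) one.

End Defs.


(* If x <= y then Max L(x,y) = {x}, so x ->_S y is the set of joins x' v x and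
   x ->_D y the set of joins y v y'.  Hence (ii) and (iii) both say that x v x'
   exists and equals 1 for every x, which is (i). *)

Section JoinSets.

Variable P : BIPoset.

Lemma is_join_sym (a b w : P) : is_join P a b w -> is_join P b a w.
Proof.
  intros [Haw [Hbw Hleast]].
  repeat split; auto.
Qed.

Lemma is_join_unique (a b w v : P) : is_join P a b w -> is_join P a b v -> w = v.
Proof.
  intros [Haw [Hbw Hw]] [Hav [Hbv Hv]].
  apply le_antisym; auto.
Qed.

Lemma is_one_set_ext (A B : P -> Prop) :
  (forall w, A w <-> B w) -> is_one_set P A <-> is_one_set P B.
Proof.
  intros HAB. unfold is_one_set.
  split; intros H w; rewrite <- H; [symmetry|]; apply HAB.
Qed.

Lemma MaxSet_Lset_le (x y z : P) : le x y -> (MaxSet P (Lset P x y) z <-> z = x).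
Proof.
  intros Hxy. split.
  - intros [[Hzx Hzy] Hmax].
    symmetry. apply Hmax; [split; [apply le_refl | exact Hxy] | exact Hzx].
  - intros ->. split.
    + split; [apply le_refl | exact Hxy].
    + intros w [Hwx Hwy] Hxw. apply le_antisym; assumption.
Qed.

Lemma sasaki_le (x y w : P) : le x y -> (sasaki P x y w <-> is_join P x (compl x) w).
Proof.
  intros Hxy. unfold sasaki, join_set. split.
  - intros [z [Hz Hjoin]].
    apply (MaxSet_Lset_le x y z Hxy) in Hz. subst z.
    apply is_join_sym, Hjoin.
  - intros Hjoin. exists x. split.
    + apply MaxSet_Lset_le; auto.
    + apply is_join_sym, Hjoin.
Qed.

Lemma dishkant_le (x y w : P) : le x y -> (dishkant P x y w <-> is_join P y (compl y) w).
Proof.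
  intros Hxy. unfold dishkant.
  rewrite (sasaki_le _ _ w (compl_antitone P x y Hxy)), compl_invol.
  split; apply is_join_sym.
Qed.

Lemma orthocomplemented_iff_joins_one :
  orthocomplemented P <-> forall x : P, is_one_set P (is_join P x (compl x)).
Proof.
  split.
  - intros Hoc x w. split.
    + intros Hjoin. exact (is_join_unique _ _ _ _ Hjoin (Hoc x)).
    + intros ->. apply Hoc.
  - intros Hone x. apply Hone. reflexivity.
Qed.

Lemma sasaki_le_one_iff_joins_one :
  (forall x y : P, le x y -> is_one_set P (sasaki P x y)) <->
  (forall x : P, is_one_set P (is_join P x (compl x))).
Proof.
  split.
  - intros Hone x.
    rewrite <- (is_one_set_ext _ _ (fun w => sasaki_le x x w (le_refl P x))).
    apply Hone, le_refl.
  - intros Hone x y Hxy.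
    rewrite (is_one_set_ext _ _ (fun w => sasaki_le x y w Hxy)).
    apply Hone.
Qed.

Lemma dishkant_le_one_iff_joins_one :
  (forall x y : P, le x y -> is_one_set P (dishkant P x y)) <->
  (forall x : P, is_one_set P (is_join P x (compl x))).
Proof.
  split.
  - intros Hone y.
    rewrite <- (is_one_set_ext _ _ (fun w => dishkant_le y y w (le_refl P y))).
    apply Hone, le_refl.
  - intros Hone x y Hxy.
    rewrite (is_one_set_ext _ _ (fun w => dishkant_le x y w Hxy)).
    apply Hone.
Qed.

End JoinSets.

Theorem theorem7 (P : BIPoset) :
  orthogonal P -> lub_complete P ->
  (orthocomplemented P <->
     (forall x y : P, le x y -> is_one_set P (sasaki P x y))) /\
  ((forall x y : P, le x y -> is_one_set P (sasaki P x y)) <->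
     (forall x y : P, le x y -> is_one_set P (dishkant P x y))).
Proof.
  intros _ _.
  rewrite orthocomplemented_iff_joins_one, sasaki_le_one_iff_joins_one,
    dishkant_le_one_iff_joins_one.
  tauto.
Qed.
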